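(* Let $A\in\mathsf{M}_n(\mathbb{C})$ and let $P=\{V_1,\dots,V_h\}$ be a partition of $\{1,\dots,n\}$. Let $\omega=\exp(2\pi \mathrm{i}/h)$ and $\alpha_{ij}=(i-j)\bmod h$ for integers $i,j$. Suppose that both of the following hold: (i) for every eigenvalue $\lambda$ of $A$ and every right Jordan chain $\{x_{\langle 0,j\rangle}\}_{j=1}^p$ of $A$ corresponding to $\lambda$, writing $x_{ij}$ for the subvector of $x_{\langle 0,j\rangle}$ indexed by $V_i$ ($i\in\{1,\dots,h\}$), and letting $x_{\langle k,j\rangle}\in\mathbb{C}^n$ be the vector whose subvector indexed by $V_i$ is $(\omega^k)^{\alpha_{ij}}x_{ij}$ for each $i$, the set $\{x_{\langle k,j\rangle}\}_{j=1}^p$ is a right Jordan chain of $A$ corresponding to $\lambda\omega^k$, for every $k\in\{0,1,\dots,h-1\}$; (ii) for every eigenvalue $\lambda$ of $A$ and every left Jordan chain $\{y_{\langle j,0\rangle}\}_{j=1}^p$ of $A$ corresponding to $\lambda$, writing $y_{ji}$ for the subvector of $y_{\langle j,0\rangle}$ indexed by $V_i$, and letting $y_{\langle j,k\rangle}\in\mathbb{C}^n$ be the vector whose subvector indexed by $V_i$ is $(\omega^k)^{\alpha_{ji}}y_{ji}$ for each $i$, the set $\{y_{\langle j,k\rangle}\}_{j=1}^p$ is a left Jordan chain of $A$ corresponding to $\lambda\omega^k$, for every $k\in\{0,1,\dots,h-1\}$. Then $A$ is $h$-cyclic with partition $P$.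
   Context: A right Jordan chain of $A$ corresponding to $\lambda$ is a list $x_1,\dots,x_p\in\mathbb{C}^n$ with $x_1\neq 0$, $Ax_1=\lambda x_1$ and $Ax_j=\lambda x_j+x_{j-1}$ for $1<j\le p$. A left Jordan chain of $A$ corresponding to $\lambda$ is a list $y_1,\dots,y_p\in\mathbb{C}^n$ (nonzero) with $y_p^\top A=\lambda y_p^\top$ and $y_j^\top A=\lambda y_j^\top+y_{j+1}^\top$ for $1\le j<p$ (so that these are the rows of $S^{-1}$ corresponding to a Jordan block when $S^{-1}AS$ is in Jordan form). Subvectors indexed by $V_i$ list the entries with indices in $V_i$ in increasing order. The digraph $\Gamma_A$ of $A=[a_{ij}]$ has vertex set $\{1,\dots,n\}$ and arcs $(i,j)$ with $a_{ij}\ne 0$; $A$ is $h$-cyclic with partition $P$ if for every arc $(i,j)$ there is $\ell\in\{1,\dots,h\}$ with $i\in V_\ell$, $j\in V_{\ell+1}$, where $V_{h+1}:=V_1$. *)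

From mathcomp Require Import all_boot all_algebra.
From mathcomp Require Import reals trigo.
From mathcomp Require Export complex.
Import GRing.Theory Num.Theory.
Set Implicit Arguments. Unset Strict Implicit. Unset Printing Implicit Defensive.
Local Open Scope ring_scope.
Local Open Scope complex_scope.

Definition omega (R : realType) (h : nat) : R[i] :=
  (cos (2 * pi / h%:R)) +i* (sin (2 * pi / h%:R)).

Definition alpha (h i j : nat) : nat := `|((i%:Z - j%:Z) %% h%:Z)%Z|%N.

(* Right Jordan chain x_1,...,x_p (0-indexed here: x 0, ..., x (p-1)). *)
Definition right_jordan_chain (F : fieldType) (n : nat) (A : 'M[F]_n) (lam : F)
    (x : nat -> 'cV[F]_n) (p : nat) : Prop :=
  [/\ (0 < p)%N, x 0%N != 0, A *m x 0%N = lam *: x 0%N &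
      forall j, (0 < j < p)%N -> A *m x j = lam *: x j + x j.-1].

(* Left Jordan chain y_1,...,y_p (0-indexed: y 0, ..., y (p-1)), all nonzero,
   as rows: y_p^T A = lam y_p^T, y_j^T A = lam y_j^T + y_{j+1}^T. *)
Definition left_jordan_chain (F : fieldType) (n : nat) (A : 'M[F]_n) (lam : F)
    (y : nat -> 'rV[F]_n) (p : nat) : Prop :=
  [/\ (0 < p)%N, (forall j, (j < p)%N -> y j != 0),
      y p.-1 *m A = lam *: y p.-1 &
      forall j, (j.+1 < p)%N -> y j *m A = lam *: y j + y j.+1].

(* The partition P = {V_1,...,V_h} of the index set is given by the block map
   [part : 'I_n -> 'I_h] (V_{l+1} = part^{-1}(l)), surjective so blocks are nonempty. *)
Definition is_partition (n h : nat) (part : 'I_n -> 'I_h) : Prop :=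
  forall l : 'I_h, exists r : 'I_n, part r = l.

Definition h_cyclic (F : fieldType) (n h : nat) (A : 'M[F]_n) (part : 'I_n -> 'I_h) : Prop :=
  forall i j : 'I_n, A i j != 0 -> (part j : nat) = ((part i).+1 %% h)%N.

(* x_<k,j>: the subvector on V_i is (w^k)^{alpha_{ij}} x_{ij}; blocks and chain
   positions are both 0-indexed, which leaves i - j unchanged. *)
Definition right_twist (R : realType) (n h : nat) (part : 'I_n -> 'I_h) (k : nat)
    (x : nat -> 'cV[R[i]]_n) : nat -> 'cV[R[i]]_n :=
  fun j => \col_r ((omega R h ^+ k) ^+ alpha h (part r) j * x j r ord0).

Definition left_twist (R : realType) (n h : nat) (part : 'I_n -> 'I_h) (k : nat)
    (y : nat -> 'rV[R[i]]_n) : nat -> 'rV[R[i]]_n :=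
  fun j => \row_r ((omega R h ^+ k) ^+ alpha h j (part r) * y j ord0 r).

(* Only hypothesis (ii) with k = 1 is needed.  Let w = omega, a primitive h-th
   root of unity, and let D be diagonal with D_rr = w^-l for r in V_(l+1).  The
   twist of a left Jordan chain (y_j) for k = 1 is the chain (w^j y_j D), and
   comparing the first relation of the two chains gives y_1 D A = w y_1 A D.
   Every nonzero generalized left eigenvector v of A heads the left Jordan chain
   (v (A - a)^j)_j, and over the algebraically closed field C these vectors span
   C^n, so D A = w A D.  Entrywise this reads w^-l a_rs = w^(1-l') a_rs for r in
   V_(l+1) and s in V_(l'+1), hence a_rs <> 0 forces l' = l + 1 (mod h). *)

From mathcomp Require Import all_boot all_order all_algebra.
From mathcomp Require Import reals trigo complex ring.
Import Order.TTheory GRing.Theory Num.Theory.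

Set Implicit Arguments.
Unset Strict Implicit.
Unset Printing Implicit Defensive.
Local Open Scope ring_scope.

Section Omega.

Variables (R : realType) (h : nat).

Lemma omega_expr d :
  omega R h ^+ d =
  (cos (d%:R * (2 * pi / h%:R)) +i* sin (d%:R * (2 * pi / h%:R)))%C.
Proof.
rewrite /omega; set t := 2 * pi / h%:R.
elim: d => [|d IH]; first by rewrite expr0 !mul0r cos0 sin0.
rewrite exprSr IH -(natr1 d) mulrDl mul1r cosD sinD.
by rewrite /GRing.mul /=; congr (_ +i* _)%C; exact: addrC.
Qed.

Lemma omega_expr_neq1 d : (0 < d < h)%N -> omega R h ^+ d != 1.
Proof.
case/andP=> d_gt0 lt_dh; have h_gt0 : (0 < h)%N by apply: leq_trans lt_dh.
have pi_gt0 : (0 : R) < pi := pi_gt0 R.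
rewrite omega_expr; set x := _ * _.
have x_gt0 : 0 < x by rewrite /x mulr_gt0 ?ltr0n // divr_gt0 ?ltr0n // mulr_gt0.
have lt_x2pi : x < pi *+ 2.
  have -> : x = d%:R / h%:R * pi *+ 2 by rewrite /x -mulr_natl; ring.
  rewrite -mulrnAr gtr_pMl; last by rewrite mulr2n addr_gt0.
  by rewrite ltr_pdivrMr ?ltr0n // mul1r ltr_nat.
apply/negP; move/eqP=> [] cos_x1 sin_x0.
case: (ltrgtP x pi) => [lt_xpi | lt_pix | eq_xpi].
- by move: (@sin_gt0_pi _ x); rewrite x_gt0 lt_xpi sin_x0 ltxx => /(_ isT).
- have : 0 < sin (x - pi).
    by apply: sin_gt0_pi; rewrite subr_gt0 lt_pix ltrBlDr -mulr2n.
  by rewrite -oppr_lt0 -sinDpi subrK sin_x0 ltxx.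
- by move/eqP: cos_x1; rewrite eq_xpi cospi -subr_eq0 -opprD oppr_eq0 -mulr2n pnatr_eq0.
Qed.

Lemma omega_prim_root : (0 < h)%N -> h.-primitive_root (omega R h).
Proof.
move=> h_gt0; apply/andP; split=> //; apply/forallP => i; rewrite unity_rootE.
have [lt_ih | le_hi] := ltnP i.+1 h.
  by rewrite (negbTE (@omega_expr_neq1 i.+1 lt_ih)) ltn_eqF.
have -> : i.+1 = h by apply/eqP; rewrite eqn_leq le_hi ltn_ord.
rewrite eqxx omega_expr mulrCA divff ?pnatr_eq0 -?lt0n // mulr1 mulr_natl.
by rewrite cos2pi sin2pi eqxx.
Qed.

End Omega.

Lemma alphaE h j l : (l <= h)%N -> alpha h j l = ((j + h - l) %% h)%N.
Proof.
move=> le_lh; rewrite /alpha.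
have -> : (j%:Z - l%:Z = (-1) * h%:Z + (j + h - l)%N%:Z)%R.
  by rewrite -addnBA // PoszD -subzn // mulN1r; ring.
by rewrite modzMDl modz_nat absz_nat.
Qed.

Lemma prim_expr_alpha (F : fieldType) (z : F) h j l :
  h.-primitive_root z -> (l <= h)%N -> z ^+ alpha h j l = z ^+ j * z ^- l.
Proof.
move=> prim_z le_lh; have z_unit : z ^+ l \is a GRing.unit.
  by rewrite unitfE expf_neq0 // (prim_root_eq0 prim_z) -lt0n (prim_order_gt0 prim_z).
rewrite alphaE // (prim_expr_mod prim_z); apply: (mulIr z_unit).
rewrite mulrVK // -exprD subnK ?(leq_trans le_lh) ?leq_addl //.
by rewrite exprD (prim_expr_order prim_z) mulr1.
Qed.

Section LeftJordanChains.

Variables (F : fieldType) (n : nat) (A : 'M[F]_n).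

Lemma left_jordan_chain_eigenvalue a y p :
  left_jordan_chain A a y p -> eigenvalue A a.
Proof.
case=> p_gt0 y_neq0 y_last _; apply/eigenvalueP; exists (y p.-1) => //.
by apply: y_neq0; rewrite ltn_predL.
Qed.

Lemma left_jordan_chain_geigen a N (v : 'rV_n) :
  v != 0 -> v *m (A - a%:M) ^+ N = 0 ->
  exists m, left_jordan_chain A a (fun j => v *m (A - a%:M) ^+ j) m.
Proof.
move=> v_neq0 vN0; pose y j := v *m (A - a%:M) ^+ j.
have yS j : y j.+1 = y j *m A - a *: y j.
  by rewrite /y exprSr mulmxA mulmxBr mul_mx_scalar.
have [m /eqP ym0 m_min] := ex_minnP (ex_intro (fun m => y m == 0) N (introT eqP vN0)).
have y_neq0 j : (j < m)%N -> y j != 0.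
  by move=> lt_jm; apply: contraTN lt_jm => /m_min; rewrite -leqNgt.
have m_gt0 : (0 < m)%N.
  by rewrite lt0n; apply: contra_eqN ym0 => /eqP->; rewrite /y mulmx1.
exists m; change (left_jordan_chain A a y m).
split=> // [|j _]; last by rewrite yS addrC subrK.
by apply/eqP; rewrite -subr_eq0 -yS prednK // ym0.
Qed.

Lemma left_jordan_chain_twisted_head (E : 'M_n) (a w : F) y z m :
  left_jordan_chain A a y m -> left_jordan_chain A (a * w) z m ->
  (forall j, z j = w ^+ j *: (y j *m E)) ->
  y 0%N *m E *m A = w *: (y 0%N *m A *m E).
Proof.
case=> m_gt0 _ y_last yS [_ _ z_last zS] zE.
have [lt_1m | le_m1] := ltnP 1 m.
  move: (zS 0%N lt_1m); rewrite !zE expr0 !scale1r expr1 => ->.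
  by rewrite (yS 0%N lt_1m) mulmxDl scalerDr -scalemxAl scalerA mulrC.
have m1 : m.-1 = 0%N by apply/eqP; rewrite -subn1 subn_eq0.
move: z_last y_last; rewrite m1 zE expr0 !scale1r => -> ->.
by rewrite -scalemxAl scalerA mulrC.
Qed.

End LeftJordanChains.

Section GeneralizedEigenvectors.

Variable F : closedFieldType.

Lemma geigenspaces_span n (A : 'M[F]_n.+1) :
  exists s : seq F, (1%:M <= \sum_(a <- s) geigenspace A a)%MS.
Proof.
have [rs char_rs] := closed_field_poly_normal (char_poly A).
rewrite (monicP (char_poly_monic A)) scale1r in char_rs.
have size_rs : size rs = n.+1.
  by have := size_char_poly A; rewrite char_rs size_prod_XsubC => -[].
set s := undup rs; exists s.
rewrite (big_nth 0) big_mkord -(kermxpoly_prod _ _); last first.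
  move=> i j _ _ neq_ji; rewrite coprimep_expl // coprimep_expr //.
  by rewrite coprimep_XsubC root_XsubC nth_uniq ?undup_uniq.
rewrite kermxpoly_min //; apply: dvdp_trans (mxminpoly_dvd_char A) _.
rewrite char_rs -prodr_undup_exp_count -/s (big_nth 0) big_mkord.
apply: (big_ind2 (fun p q => p %| q)) => [|p1 p2 q1 q2|i _]; first exact: dvdpp.
  exact: dvdp_mul.
by apply: dvdp_exp2l; rewrite -size_rs count_size.
Qed.

Lemma mx_eq0_on_geigenvectors n (A M : 'M[F]_n) :
  (forall a (v : 'rV_n), v *m (A - a%:M) ^+ n = 0 -> v *m M = 0) -> M = 0.
Proof.
case: n A M => [|n] A M killM; first exact: thinmx0.
have [s span] := geigenspaces_span A.
apply/eqP; rewrite -[M]mul1mx -sub_kermx; apply: submx_trans span _.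
apply: (big_ind (fun B => (B <= kermx M)%MS)) => [|B C|a _].
- exact: sub0mx.
- by move=> subB subC; rewrite addsmx_sub subB.
rewrite sub_kermx; apply/eqP/row_matrixP => r; rewrite row_mul row0.
by apply: (killM a); rewrite -row_mul geigenspaceE mulmx_ker row0.
Qed.

End GeneralizedEigenvectors.

Definition phase_mx (F : fieldType) n h (w : F) (part : 'I_n -> 'I_h) : 'M[F]_n :=
  diag_mx (\row_r w ^- part r).

Lemma h_cyclic_phase_mx (F : fieldType) n h (A : 'M[F]_n) (part : 'I_n -> 'I_h) w :
  h.-primitive_root w -> phase_mx w part *m A = w *: (A *m phase_mx w part) ->
  h_cyclic A part.
Proof.
move=> prim_w commA i j Aij_neq0.
have w_neq0 : w != 0 by rewrite (prim_root_eq0 prim_w) -lt0n (prim_order_gt0 prim_w).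
have /eqP : w ^+ part j = w ^+ (part i).+1.
  move/matrixP/(_ i j): commA; rewrite mul_diag_mx mxE mul_mx_diag !mxE.
  move/(congr1 (fun x => x * (w ^+ part i * w ^+ part j))).
  have -> : w ^- part i * A i j * (w ^+ part i * w ^+ part j) = A i j * w ^+ part j.
    by field; rewrite expf_neq0.
  have -> : w * (A i j / w ^+ part j) * (w ^+ part i * w ^+ part j) =
            A i j * w ^+ (part i).+1.
    by rewrite exprS; field; rewrite expf_neq0.
  exact: mulfI.
by rewrite (eq_prim_root_expr prim_w) modn_small // => /eqP.
Qed.

Lemma h_cyclic_le1 (F : fieldType) n h (A : 'M[F]_n) (part : 'I_n -> 'I_h) :
  (h <= 1)%N -> h_cyclic A part.
Proof.
case: h part => [|[|//]] part _ i j _; first by case: (part i).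
by rewrite modn1; case: (part j) => -[].
Qed.

Lemma left_twist1E (R : realType) n h (part : 'I_n -> 'I_h) y j : (0 < h)%N ->
  left_twist part 1 y j = omega R h ^+ j *: (y j *m phase_mx (omega R h) part).
Proof.
move=> h_gt0; apply/rowP => r; rewrite /left_twist mul_mx_diag !mxE expr1.
by rewrite (prim_expr_alpha _ (omega_prim_root R h_gt0)) 1?ltnW // mulrA mulrAC.
Qed.

Theorem theorem4p5 (R : realType) (n h : nat) (A : 'M[R[i]]_n)
    (part : 'I_n -> 'I_h) :
  is_partition part ->
  (forall (lam : R[i]) (x : nat -> 'cV[R[i]]_n) (p : nat),
      eigenvalue A lam -> right_jordan_chain A lam x p ->
      forall k : nat, (k < h)%N ->
        right_jordan_chain A (lam * omega R h ^+ k) (right_twist part k x) p) ->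
  (forall (lam : R[i]) (y : nat -> 'rV[R[i]]_n) (p : nat),
      eigenvalue A lam -> left_jordan_chain A lam y p ->
      forall k : nat, (k < h)%N ->
        left_jordan_chain A (lam * omega R h ^+ k) (left_twist part k y) p) ->
  h_cyclic A part.
Proof.
move=> _ _ twist_left.
have [lt_1h | ] := ltnP 1 h; last exact: h_cyclic_le1.
have h_gt0 : (0 < h)%N := ltnW lt_1h.
apply: (h_cyclic_phase_mx (omega_prim_root R h_gt0)); apply/eqP.
rewrite -subr_eq0; apply/eqP/(mx_eq0_on_geigenvectors (A := A)) => a v vN0.
have [-> | v_neq0] := eqVneq v 0; first by rewrite mul0mx.
have [m chain] := left_jordan_chain_geigen v_neq0 vN0.
have twisted := twist_left a _ m (left_jordan_chain_eigenvalue chain) chain 1%N lt_1h.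
rewrite expr1 in twisted.
have := left_jordan_chain_twisted_head chain twisted (fun j => left_twist1E part _ j h_gt0).
by rewrite expr0 mulmx1 mulmxBr mulmxA => ->; rewrite -scalemxAr mulmxA subrr.
Qed.
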